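(* Let $\mathcal{L}$ be a family of balanced algebraic laws over a signature $\Sigma$. Then the geometry monoid $\mathcal{G}(\mathcal{L})$ is an inverse monoid.
   Context: Terms $T_\Sigma(V)$ over an infinite set $V$ of variables; an algebraic law $l=r$ is balanced if the same variables occur in $l$ and $r$. Addresses are finite sequences of positive integers, $t/\alpha$ the subterm of $t$ at address $\alpha$. For an oriented law $L=(l,r)$ and an address $\alpha$, the partial operator $O^{+}_{L,\alpha}$ maps $t$ to $t'$ iff $t/\alpha=l\sigma$ for some substitution $\sigma$ and $t'$ is obtained from $t$ by replacing the $\alpha$-th subterm by $r\sigma$; $O^{-}_{L,\alpha}$ is its inverse partial map. Operators act on the right and $f\bullet g$ means ''$f$ then $g$''. The geometry monoid $\mathcal{G}(\mathcal{L})$ is the monoid of partial maps generated by all $O^{\pm}_{L,\alpha}$ under $\bullet$ (it may contain the empty map). *)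

From Stdlib Require Import List Arith.
Import ListNotations.
Set Implicit Arguments.

Section Terms.
Variables (Sigma : Type) (ar : Sigma -> nat) (V : Type).

Inductive term : Type :=
| Var : V -> term
| App : Sigma -> list term -> term.

Fixpoint wf (t : term) : Prop :=
  match t with
  | Var _ => True
  | App f args => length args = ar f /\
      (fix wfl (l : list term) : Prop :=
         match l with [] => True | u :: l' => wf u /\ wfl l' end) args
  end.

(* T_Sigma(V) is {t | wf t} *)

Fixpoint occurs (x : V) (t : term) : Prop :=
  match t with
  | Var y => x = y
  | App _ args =>
      (fix occl (l : list term) : Prop :=
         match l with [] => False | u :: l' => occurs x u \/ occl l' end) args
  end.

Definition balanced (l r : term) : Prop := forall x, occurs x l <-> occurs x r.

Fixpoint subst (s : V -> term) (t : term) : term :=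
  match t with
  | Var x => s x
  | App f args => App f (map (subst s) args)
  end.

(* addresses: finite sequences of positive integers; i refers to the i-th
   argument (1-based) *)
Definition address := list nat.

Fixpoint subterm (t : term) (a : address) : option term :=
  match a with
  | [] => Some t
  | i :: a' =>
      match t with
      | Var _ => None
      | App f args =>
          match i with
          | 0 => None
          | S j => match nth_error args j with
                   | Some u => subterm u a'
                   | None => None
                   end
          end
      end
  end.

Fixpoint replace_nth (l : list term) (j : nat) (u : term) : list term :=
  match l, j with
  | [], _ => []
  | _ :: l', 0 => u :: l'
  | v :: l', S j' => v :: replace_nth l' j' u
  end.

Fixpoint replace (t : term) (a : address) (u : term) : option term :=
  match a with
  | [] => Some u
  | i :: a' =>
      match t with
      | Var _ => None
      | App f args =>
          match i with
          | 0 => None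
          | S j => match nth_error args j with
                   | Some v => match replace v a' u with
                               | Some v' => Some (App f (replace_nth args j v'))
                               | None => None
                               end
                   | None => None
                   end
          end
      end
  end.

(* partial maps on T_Sigma(V), represented by their graphs *)
Definition pmap := term -> term -> Prop.

Definition Oplus (l r : term) (a : address) : pmap :=
  fun t t' => wf t /\ wf t' /\
    exists s : V -> term, (forall x, wf (s x)) /\
      subterm t a = Some (subst s l) /\ replace t a (subst s r) = Some t'.

Definition Ominus (l r : term) (a : address) : pmap :=
  fun t t' => Oplus l r a t' t.

(* f \bullet g : "f then g" *)
Definition pcomp (f g : pmap) : pmap :=
  fun t t'' => exists t', f t t' /\ g t' t''.

Definition pid : pmap := fun t t' => wf t /\ t = t'.

Inductive geom (L : term -> term -> Prop) : pmap -> Prop :=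
| geom_id : geom L pid
| geom_plus : forall l r a, L l r -> geom L (Oplus l r a)
| geom_minus : forall l r a, L l r -> geom L (Ominus l r a)
| geom_comp : forall f g, geom L f -> geom L g -> geom L (pcomp f g).

End Terms.

Definition inverse_monoid (X : Type) (M : X -> Prop) (op : X -> X -> X) (e : X)
  : Prop :=
  M e /\ (forall f g, M f -> M g -> M (op f g)) /\
  (forall f g h, M f -> M g -> M h -> op (op f g) h = op f (op g h)) /\
  (forall f, M f -> op e f = f /\ op f e = f) /\
  (forall f, M f -> exists g, (M g /\ op (op f g) f = f /\ op (op g f) g = g) /\
     forall g', M g' -> op (op f g') f = f -> op (op g' f) g' = g' -> g' = g).

(* Balancedness makes each generator O^+_{L,α} a partial injection: a match of
   l determines the substitution on all variables of r and conversely, and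
   rewriting at α can be undone by rewriting back.  O^-_{L,α} is the converse
   of O^+_{L,α}, so G(L) is a monoid of partial injections closed under
   converse, and in such a monoid the converse of f is the unique g with
   f g f = f and g f g = g. *)

From Stdlib Require Import List FunctionalExtensionality PropExtensionality.
Import ListNotations.
Set Implicit Arguments.

Section PartialMaps.
Variables (Sigma : Type) (ar : Sigma -> nat) (V : Type).
Implicit Types f g h : pmap Sigma V.

Definition conv f : pmap Sigma V := fun t u => f u t.

Definition functional f : Prop := forall t u v, f t u -> f t v -> u = v.

Definition partial_injection f : Prop := functional f /\ functional (conv f).

Definition wf_graph f : Prop := forall t u, f t u -> wf ar t /\ wf ar u.

Lemma pmap_ext f g : (forall t u, f t u <-> g t u) -> f = g.
Proof.
  intros H. apply functional_extensionality; intros t.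
  apply functional_extensionality; intros u.
  apply propositional_extensionality, H.
Qed.

Lemma pcompA f g h : pcomp (pcomp f g) h = pcomp f (pcomp g h).
Proof.
  apply pmap_ext; intros t u; split.
  - intros [m [[k [A B]] C]]. exists k. split; [|exists m; split]; assumption.
  - intros [k [A [m [B C]]]]. exists m. split; [exists k; split|]; assumption.
Qed.

Lemma pcomp_pidl f : wf_graph f -> pcomp (@pid Sigma ar V) f = f.
Proof.
  intros Wf. apply pmap_ext; intros t u; split.
  - intros [m [[_ <-] B]]; exact B.
  - intros H. exists t. split; [split|]; auto. exact (proj1 (Wf _ _ H)).
Qed.

Lemma pcomp_pidr f : wf_graph f -> pcomp f (@pid Sigma ar V) = f.
Proof.
  intros Wf. apply pmap_ext; intros t u; split.
  - intros [m [A [_ <-]]]; exact A.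
  - intros H. exists u. split; [|split]; auto. exact (proj2 (Wf _ _ H)).
Qed.

Lemma conv_pid : conv (@pid Sigma ar V) = @pid Sigma ar V.
Proof.
  apply pmap_ext; intros t u; split; intros [W <-]; split; auto.
Qed.

Lemma conv_pcomp f g : conv (pcomp f g) = pcomp (conv g) (conv f).
Proof.
  apply pmap_ext; intros t u; split; intros [m [A B]]; eexists; eauto.
Qed.

Lemma partial_injection_pid : partial_injection (@pid Sigma ar V).
Proof.
  split; intros t u v [_ <-] [_ <-]; reflexivity.
Qed.

Lemma functional_pcomp f g : functional f -> functional g -> functional (pcomp f g).
Proof.
  intros F G t u v [m1 [A1 B1]] [m2 [A2 B2]].
  assert (m1 = m2) as <- by eauto. eauto.
Qed.

Lemma partial_injection_pcomp f g :
  partial_injection f -> partial_injection g -> partial_injection (pcomp f g).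
Proof.
  intros [F1 F2] [G1 G2]. split; [now apply functional_pcomp|].
  rewrite conv_pcomp. now apply functional_pcomp.
Qed.

Lemma partial_injection_conv f : partial_injection f -> partial_injection (conv f).
Proof. intros [F1 F2]; split; assumption. Qed.

Lemma wf_graph_conv f : wf_graph f -> wf_graph (conv f).
Proof. intros Wf t u H. destruct (Wf _ _ H); split; assumption. Qed.

Lemma wf_graph_pcomp f g : wf_graph f -> wf_graph g -> wf_graph (pcomp f g).
Proof.
  intros Wf Wg t u [m [A B]]. split; [apply (Wf _ _ A) | apply (Wg _ _ B)].
Qed.

Lemma pcomp_conv_r f : functional (conv f) -> pcomp (pcomp f (conv f)) f = f.
Proof.
  intros Finj. apply pmap_ext; intros t u; split.
  - intros [m [[k [A B]] C]]. assert (t = m) as <- by (eapply Finj; eauto). exact C.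
  - intros H. exists t. split; [exists u|]; auto.
Qed.

Lemma conv_unique f g : partial_injection f -> partial_injection g ->
  pcomp (pcomp f g) f = f -> pcomp (pcomp g f) g = g -> g = conv f.
Proof.
  intros [F1 F2] [G1 G2] Ef Eg. apply pmap_ext; intros t u; split.
  - intros H. pose proof H as H'. rewrite <- Eg in H'.
    destruct H' as [m [[k [A B]] C]].
    assert (k = u) as -> by eauto. assert (m = t) as -> by (eapply G2; eauto).
    exact B.
  - intros H. pose proof H as H'. rewrite <- Ef in H'.
    destruct H' as [m [[k [A B]] C]].
    assert (k = t) as -> by eauto. assert (m = u) as -> by (eapply F2; eauto).
    exact B.
Qed.

Lemma inverse_monoid_partial_injections (M : pmap Sigma V -> Prop) :
  M (@pid Sigma ar V) ->
  (forall f g, M f -> M g -> M (pcomp f g)) ->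
  (forall f, M f -> M (conv f)) ->
  (forall f, M f -> partial_injection f /\ wf_graph f) ->
  inverse_monoid M (@pcomp Sigma V) (@pid Sigma ar V).
Proof.
  intros Mid Mcomp Mconv Minj.
  split; [exact Mid|]. split; [exact Mcomp|].
  split; [intros; apply pcompA|].
  split.
  { intros f Mf. destruct (Minj f Mf) as [_ Wf].
    split; [apply pcomp_pidl | apply pcomp_pidr]; exact Wf. }
  intros f Mf. destruct (Minj f Mf) as [[F1 F2] _].
  exists (conv f). split; [split; [|split]|].
  - now apply Mconv.
  - now apply pcomp_conv_r.
  - exact (pcomp_conv_r (f := conv f) F1).
  - intros g Mg Ef Eg. apply conv_unique; auto.
    + split; assumption.
    + exact (proj1 (Minj g Mg)).
Qed.

End PartialMaps.

Section Rewriting.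
Variables (Sigma : Type) (ar : Sigma -> nat) (V : Type).
Notation term := (term Sigma V).

Definition term_nested_ind (P : term -> Prop)
  (HV : forall x, P (Var Sigma x))
  (HA : forall f args, Forall P args -> P (App f args)) : forall t, P t :=
  fix F t := match t with
  | Var _ x => HV x
  | App f args => HA f args ((fix G l := match l return Forall P l with
        | [] => Forall_nil _ | u :: l' => Forall_cons _ (F u) (G l') end) args)
  end.

Lemma occurs_App (x : V) f (args : list term) :
  occurs x (App f args) <-> exists u, In u args /\ occurs x u.
Proof.
  induction args as [|a args IH]; simpl.
  - split; [tauto | intros [u [[] _]]].
  - change ((fix occl (l : list term) : Prop :=
         match l with [] => False | u :: l' => occurs x u \/ occl l' end) args)
      with (occurs x (App f args)).
    rewrite IH. split.
    + intros [H | [u [Hu Hx]]]; eauto.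
    + intros [u [[<- | Hu] Hx]]; eauto.
Qed.

Lemma subst_eq_occurs {s1 s2 : V -> term} {t} :
  subst s1 t = subst s2 t -> forall x, occurs x t -> s1 x = s2 x.
Proof.
  induction t as [y | f args IH] using term_nested_ind.
  - intros H x Hx. simpl in *. subst. exact H.
  - intros H x Hx. apply occurs_App in Hx. destruct Hx as [u [Hu Hx]].
    simpl in H. injection H as H. rewrite Forall_forall in IH.
    exact (IH u Hu (ext_in_map H u Hu) x Hx).
Qed.

Lemma subst_ext_occurs (s1 s2 : V -> term) t :
  (forall x, occurs x t -> s1 x = s2 x) -> subst s1 t = subst s2 t.
Proof.
  induction t as [y | f args IH] using term_nested_ind.
  - intros H. apply H. reflexivity.
  - intros H. simpl. f_equal. rewrite Forall_forall in IH. apply map_ext_in.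
    intros u Hu. apply IH; auto. intros x Hx. apply H, occurs_App. eauto.
Qed.

Lemma subst_balanced {l r : term} {s1 s2 : V -> term} :
  balanced l r -> subst s1 l = subst s2 l -> subst s1 r = subst s2 r.
Proof.
  intros Hb E. apply subst_ext_occurs. intros x Hx.
  apply (subst_eq_occurs E), Hb, Hx.
Qed.

Lemma nth_error_replace_nth (l : list term) j u v :
  nth_error l j = Some v -> nth_error (replace_nth l j u) j = Some u.
Proof.
  revert j; induction l as [|a l IH]; intros [|j]; simpl; try discriminate; auto.
Qed.

Lemma replace_nth_twice (l : list term) j u w :
  replace_nth (replace_nth l j u) j w = replace_nth l j w.
Proof.
  revert j; induction l as [|a l IH]; intros [|j]; simpl; auto. now rewrite IH.
Qed.

Lemma replace_nth_id {l : list term} {j v} :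
  nth_error l j = Some v -> replace_nth l j v = l.
Proof.
  revert j; induction l as [|a l IH]; intros [|j]; simpl; try discriminate.
  - now intros [= ->].
  - intros H. now rewrite IH.
Qed.

Lemma subterm_replace {a : address} {t w v : term} :
  replace t a w = Some v -> subterm v a = Some w.
Proof.
  revert t v; induction a as [|i a IH]; intros t v; simpl; [congruence|].
  destruct t as [x | f args]; [discriminate|]. destruct i as [|j]; [discriminate|].
  destruct (nth_error args j) as [v0|] eqn:E; [|discriminate].
  destruct (replace v0 a w) as [v0'|] eqn:E2; [|discriminate].
  intros [= <-]. erewrite nth_error_replace_nth by eauto. eauto.
Qed.

Lemma replace_undo {a : address} {t w0 w v : term} :
  subterm t a = Some w0 -> replace t a w = Some v -> replace v a w0 = Some t.
Proof.
  revert t v; induction a as [|i a IH]; intros t v; simpl; [congruence|].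
  destruct t as [x | f args]; [discriminate|]. destruct i as [|j]; [discriminate|].
  destruct (nth_error args j) as [v0|] eqn:E; [|discriminate].
  intros Hs. destruct (replace v0 a w) as [v0'|] eqn:E2; [|discriminate].
  intros [= <-]. erewrite nth_error_replace_nth by eauto.
  rewrite (IH _ _ Hs E2), replace_nth_twice, (replace_nth_id E).
  reflexivity.
Qed.

Lemma partial_injection_Oplus (l r : term) a :
  balanced l r -> partial_injection (Oplus ar l r a).
Proof.
  intros Hb. split.
  - intros t u v [_ [_ [s1 [_ [H1 R1]]]]] [_ [_ [s2 [_ [H2 R2]]]]].
    rewrite H1 in H2. injection H2 as H2.
    rewrite (subst_balanced Hb H2) in R1. congruence.
  - intros t u v [_ [_ [s1 [_ [H1 R1]]]]] [_ [_ [s2 [_ [H2 R2]]]]].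
    pose proof (replace_undo H1 R1) as U1.
    pose proof (replace_undo H2 R2) as U2.
    assert (Er : subst s1 r = subst s2 r).
    { pose proof (subterm_replace R1). pose proof (subterm_replace R2). congruence. }
    assert (Hrl : balanced r l) by (intros x; symmetry; apply Hb).
    rewrite (subst_balanced Hrl Er) in U1. congruence.
Qed.

Lemma wf_graph_Oplus (l r : term) a : wf_graph ar (Oplus ar l r a).
Proof. intros t u [Wt [Wu _]]; split; assumption. Qed.

Section Geometry.
Variable L : term -> term -> Prop.
Hypothesis L_balanced : forall l r, L l r -> balanced l r.

Lemma geom_conv f : geom ar L f -> geom ar L (conv f).
Proof.
  induction 1 as [| l r a HL | l r a HL | f g _ IHf _ IHg].
  - rewrite conv_pid. constructor.
  - now apply geom_minus.
  - now apply geom_plus.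
  - rewrite conv_pcomp. now constructor.
Qed.

Lemma geom_partial_injection f :
  geom ar L f -> partial_injection f /\ wf_graph ar f.
Proof.
  induction 1 as [| l r a HL | l r a HL | f g _ [If Wf] _ [Ig Wg]].
  - split; [apply partial_injection_pid | intros t u [W <-]; auto].
  - split; [apply partial_injection_Oplus, L_balanced, HL | apply wf_graph_Oplus].
  - split; [apply partial_injection_conv, partial_injection_Oplus, L_balanced, HL
           | apply wf_graph_conv, wf_graph_Oplus].
  - split; [now apply partial_injection_pcomp | now apply wf_graph_pcomp].
Qed.

End Geometry.
End Rewriting.

Theorem proposition1p8 (Sigma : Type) (ar : Sigma -> nat) (V : Type)
  (V_infinite : exists i : nat -> V, forall m n, i m = i n -> m = n)
  (L : term Sigma V -> term Sigma V -> Prop)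
  (L_wf : forall l r, L l r -> wf ar l /\ wf ar r)
  (L_balanced : forall l r, L l r -> balanced l r) :
  inverse_monoid (geom ar L) (@pcomp Sigma V) (@pid Sigma ar V).
Proof.
  apply inverse_monoid_partial_injections.
  - apply geom_id.
  - apply geom_comp.
  - apply geom_conv.
  - now apply geom_partial_injection.
Qed.
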